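(* Every topological manifold $X$ of positive dimension admits infinitely many pairwise nonisomorphic nontrivial topological quandle structures.
   Context: A topological quandle structure on a topological space $X$ is a continuous map $f:X\times X\to X$ such that for every $y\in X$ the map $R_y:X\to X$, $x\mapsto f(x,y)$, is a homeomorphism, $f(f(x,y),z)=f(f(x,z),f(y,z))$ for all $x,y,z\in X$, and $f(x,x)=x$ for all $x\in X$. The structure is trivial if $f(x,y)=x$ for all $x,y$, and nontrivial otherwise. Two such structures $f_1,f_2$ on $X$ are isomorphic if there is a homeomorphism $\varphi:X\to X$ with $\varphi(f_1(x,y))=f_2(\varphi(x),\varphi(y))$ for all $x,y\in X$. *)

From HB Require Import structures.
From mathcomp Require Import all_boot all_order all_algebra.
From mathcomp Require Import all_classical all_reals all_analysis.
Set Implicit Arguments. Unset Strict Implicit. Unset Printing Implicit Defensive.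
Import Order.TTheory GRing.Theory Num.Theory.
Import numFieldNormedType.Exports.
Local Open Scope classical_set_scope.
Local Open Scope ring_scope.

Definition is_homeomorphism (X Y : topologicalType) (g : X -> Y) : Prop :=
  exists h : Y -> X,
    [/\ continuous g, continuous h, cancel g h & cancel h g].

Definition locally_euclidean (R : realType) (n : nat) (X : topologicalType) : Prop :=
  forall x : X, exists U : set X, exists phi : X -> 'rV[R]_n,
    exists psi : 'rV[R]_n -> X,
    [/\ open U, U x, open (phi @` U),
        {within U, continuous phi} &
        ({within phi @` U, continuous psi} /\
         (forall y, U y -> psi (phi y) = y))].

Definition topological_manifold (R : realType) (n : nat) (X : topologicalType) : Prop :=
  [/\ hausdorff_space X, @second_countable X & locally_euclidean R n X].

Definition topological_quandle (X : topologicalType) (f : X * X -> X) : Prop :=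
  [/\ continuous f,
      (forall y : X, is_homeomorphism (fun x => f (x, y))),
      (forall x y z : X, f (f (x, y), z) = f (f (x, z), f (y, z))) &
      (forall x : X, f (x, x) = x)].

Definition trivial_quandle (X : topologicalType) (f : X * X -> X) : Prop :=
  forall x y : X, f (x, y) = x.

Definition quandle_isomorphic (X : topologicalType) (f1 f2 : X * X -> X) : Prop :=
  exists phi : X -> X, is_homeomorphism phi /\
    forall x y : X, phi (f1 (x, y)) = f2 (phi x, phi y).

(* Fix a chart around some point and a ball B in it, and place 2N points
   c_1, ..., c_N, d_1, ..., d_N on a segment of B, pairwise far apart. A
   vector t in R^N acts on X by homeomorphisms: inside a small ball around c_m
   it is a radial reparametrisation with slope e^(t_m) at the centre, and it
   is the identity elsewhere; this is an action of the additive group R^N.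
   Let lam(y) in R^N record the heights at y of small bumps centred at the d_m
   (zero off the chart). Both the action and lam are trivial outside a compact
   subset of the chart, which makes them continuous on all of X. The action
   does not touch the bumps, so lam is invariant, and lam(x)_m = 0 whenever
   x lies in the ball around c_m; hence x <| y := lam(y) . x is a topological
   quandle. Its right translations by the N bump peaks are nontrivial and
   have pairwise disjoint supports, while every nontrivial right translation
   moves points near some c_m, so no N + 1 of them have disjoint supports.
   This count is an isomorphism invariant, so the quandles obtained for
   N = 1, 2, ... are pairwise nonisomorphic. *)

From mathcomp Require Import all_boot all_order all_algebra.
From mathcomp Require Import all_classical all_reals all_analysis.
From mathcomp Require Import ring lra zify.
Set Implicit Arguments. Unset Strict Implicit. Unset Printing Implicit Defensive.
Import Order.TTheory GRing.Theory Num.Theory.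
Import numFieldNormedType.Exports.
Local Open Scope classical_set_scope.
Local Open Scope ring_scope.

Lemma quandle_isomorphic_sym (X : topologicalType) (f1 f2 : X * X -> X) :
  quandle_isomorphic f1 f2 -> quandle_isomorphic f2 f1.
Proof.
move=> [ph [[h [phc hc phK hK]] phM]]; exists h; split; first by exists ph.
by move=> x y; apply: (can_inj phK); rewrite phM !hK.
Qed.

Definition has_disjoint_translations (T : Type) (f : T * T -> T) (M : nat) :=
  exists ys : 'I_M -> T, (forall i, exists x, f (x, ys i) <> x) /\
    (forall i j x, i != j -> f (x, ys i) <> x -> f (x, ys j) = x).

Lemma has_disjoint_translations_iso (X : topologicalType) (f1 f2 : X * X -> X) M :
  quandle_isomorphic f1 f2 ->
  has_disjoint_translations f1 M -> has_disjoint_translations f2 M.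
Proof.
move=> [ph [[h [_ _ phK hK]] phM]] [ys [ys_moves ys_disj]].
have ph_inj : injective ph := can_inj phK.
exists (ph \o ys); split=> [i | i j x' ij].
  have [x hx] := ys_moves i; exists (ph x) => /= he; apply: hx.
  by apply: ph_inj; rewrite phM.
rewrite /= -(hK x') -!phM => hi; congr ph; apply: ys_disj ij _.
by move=> he; apply: hi; rewrite he.
Qed.

Lemma quandle_isomorphic_disjoint_translations (X : topologicalType) (f1 f2 : X * X -> X) M :
  quandle_isomorphic f1 f2 ->
  has_disjoint_translations f1 M <-> has_disjoint_translations f2 M.
Proof.
move=> iso12; split; first exact: has_disjoint_translations_iso.
exact/has_disjoint_translations_iso/quandle_isomorphic_sym.
Qed.

Section InvariantActionQuandle.
Variables (X : topologicalType) (G : zmodType) (act : G -> X -> X) (lam : X -> G).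
Hypotheses (act0 : forall x, act 0 x = x)
  (actD : forall g h x, act g (act h x) = act (g + h) x)
  (act_continuous : forall g, continuous (act g))
  (lam_act : forall g x, lam (act g x) = lam x)
  (act_lam : forall x, act (lam x) x = x)
  (act_lam_continuous : continuous (fun xy : X * X => act (lam xy.2) xy.1)).

Lemma topological_quandle_act : topological_quandle (fun xy => act (lam xy.2) xy.1).
Proof.
split=> //= [y | x y z].
  exists (act (- lam y)); split=> // x; rewrite actD ?addNr ?subrr act0 //.
by rewrite lam_act !actD addrC.
Qed.

End InvariantActionQuandle.

Section RadialDilation.
Variables (R : realType) (V : normedModType R) (c : V) (rho : R).
Hypothesis rho_gt0 : 0 < rho.

(* On radii [rho * s], [0 <= s <= 1], the dilation acts by the Moebius map
   [s |-> e^t s / (1 + (e^t - 1) s)] of [[0, 1]]: it fixes [0] and [1], has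
   slope [e^t] at [0], and these maps compose additively in [t]. *)
Definition dilation_factor (t s : R) : R := expR t / (1 + (expR t - 1) * s).

Definition radius_ratio (p : V) : R := Num.min 1 (`|p - c| / rho).

Definition dilate (t : R) (p : V) : V := c + dilation_factor t (radius_ratio p) *: (p - c).

Lemma dilation_denom_gt0 (t s : R) : 0 <= s <= 1 -> 0 < 1 + (expR t - 1) * s.
Proof.
move=> /andP[s0 s1]; have := expR_gt0 t.
have [->|s_neq1] := eqVneq s 1; first by lra.
have : s < 1 by rewrite lt_neqAle s_neq1 s1.
by nra.
Qed.

Lemma dilation_factor_gt0 (t s : R) : 0 <= s <= 1 -> 0 < dilation_factor t s.
Proof. by move=> s01; rewrite divr_gt0 ?expR_gt0 ?dilation_denom_gt0. Qed.

Lemma dilation_factorD (t t' s : R) : 0 <= s <= 1 ->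
  dilation_factor t (dilation_factor t' s * s) * dilation_factor t' s =
  dilation_factor (t + t') s.
Proof.
move=> s01; have d' := dilation_denom_gt0 t' s01.
have d := dilation_denom_gt0 (t + t') s01.
rewrite /dilation_factor expRD in d *.
have -> : 1 + (expR t - 1) * (expR t' / (1 + (expR t' - 1) * s) * s) =
          (1 + (expR t * expR t' - 1) * s) / (1 + (expR t' - 1) * s).
  by field; rewrite gt_eqF.
by field; rewrite !gt_eqF.
Qed.

Lemma radius_ratio_range p : 0 <= radius_ratio p <= 1.
Proof. by rewrite /radius_ratio le_min ler01 divr_ge0 ?(ltW rho_gt0) //= ge_min lexx. Qed.

Lemma radius_ratio_in p : `|p - c| < rho -> radius_ratio p = `|p - c| / rho.
Proof. by move=> h; rewrite /radius_ratio min_r // ler_pdivrMr // mul1r ltW. Qed.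

Lemma dilate_out t p : rho <= `|p - c| -> dilate t p = p.
Proof.
move=> h; rewrite /dilate /radius_ratio min_l; last by rewrite ler_pdivlMr // mul1r.
rewrite /dilation_factor mulr1 addrCA subrr addr0 divff ?gt_eqF ?expR_gt0 //.
by rewrite scale1r addrC subrK.
Qed.

Lemma dilate0 p : dilate 0 p = p.
Proof.
by rewrite /dilate /dilation_factor expR0 subrr mul0r addr0 divr1 scale1r addrC subrK.
Qed.

Lemma norm_dilate t p :
  `|dilate t p - c| = dilation_factor t (radius_ratio p) * `|p - c|.
Proof.
rewrite /dilate addrC addKr normrZ gtr0_norm //.
exact/dilation_factor_gt0/radius_ratio_range.
Qed.

Lemma dilate_ball t p : `|p - c| < rho -> `|dilate t p - c| < rho.
Proof.
move=> h; rewrite norm_dilate radius_ratio_in //.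
set s := `|p - c| / rho.
have -> : `|p - c| = s * rho by rewrite mulfVK ?gt_eqF.
have s0 : 0 <= s by rewrite divr_ge0 // ltW.
have s1 : s < 1 by rewrite ltr_pdivrMr // mul1r.
have d : 0 < 1 + (expR t - 1) * s by apply: dilation_denom_gt0; rewrite s0 ltW.
rewrite /dilation_factor mulrAC ltr_pdivrMr //.
have : 0 < rho * (1 - s) by rewrite mulr_gt0 // subr_gt0.
nra.
Qed.

Lemma dilateD t t' p : dilate t (dilate t' p) = dilate (t + t') p.
Proof.
have [p_out|p_in] := leP rho `|p - c|; first by rewrite !dilate_out.
have s_dil : radius_ratio (dilate t' p) =
    dilation_factor t' (radius_ratio p) * radius_ratio p.
  by rewrite !radius_ratio_in ?dilate_ball // norm_dilate radius_ratio_in ?mulrA.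
rewrite {1}/dilate s_dil.
have -> : dilate t' p - c = dilation_factor t' (radius_ratio p) *: (p - c).
  by rewrite /dilate addrC addKr.
by rewrite scalerA dilation_factorD ?radius_ratio_range.
Qed.

Lemma dilate_fixed t p : `|p - c| < rho -> p != c -> dilate t p = p -> t = 0.
Proof.
move=> p_in p_neq_c /(congr1 (fun q => q - c)).
rewrite /dilate addrC addKr radius_ratio_in // => /eqP.
rewrite -subr_eq0 -{3}[p - c]scale1r -scalerBl scaler_eq0.
rewrite !subr_eq0 (negPf p_neq_c) orbF => /eqP.
set s := `|p - c| / rho.
have s0 : 0 <= s by rewrite divr_ge0 // ltW.
have s1 : s < 1 by rewrite ltr_pdivrMr // mul1r.
have d : 0 < 1 + (expR t - 1) * s by apply: dilation_denom_gt0; rewrite s0 ltW.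
rewrite /dilation_factor => /(congr1 (fun u => u * (1 + (expR t - 1) * s))).
rewrite mulfVK ?gt_eqF // mul1r => /eqP.
have -> : (expR t == 1 + (expR t - 1) * s) = ((expR t - 1) * (1 - s) == 0).
  by apply/eqP/eqP; lra.
rewrite mulf_eq0 !subr_eq0 (gt_eqF s1) orbF => /eqP.
by rewrite -expR0 => /expR_inj.
Qed.

Lemma continuous_radius_ratio : continuous radius_ratio.
Proof.
move=> p; apply: (@continuous_min _ _ (fun=> 1) (fun q => `|q - c| / rho)).
  exact: cst_continuous.
apply: cvgM; last exact: cvg_cst.
by apply: cvg_norm; apply: cvgB; [exact: cvg_id | exact: cvg_cst].
Qed.

Lemma dilate_cvg {T : Type} (F : set_system T) {FF : Filter F}
    (tf : T -> R) (pf : T -> V) (t : R) (p : V) :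
  tf @ F --> t -> pf @ F --> p ->
  (fun x => dilate (tf x) (pf x)) @ F --> dilate t p.
Proof.
move=> tft pfp; have rr := continuous_cvg FF (@continuous_radius_ratio p) pfp.
apply: cvgD; first exact: cvg_cst.
apply: cvgZ; last by apply: cvgB; [exact: pfp | exact: cvg_cst].
have ett := continuous_cvg FF (@continuous_expR R t) tft.
rewrite /dilation_factor; apply: cvgM => //.
apply: cvgV; first by rewrite gt_eqF ?dilation_denom_gt0 ?radius_ratio_range.
apply: cvgD; first exact: cvg_cst.
by apply: cvgM => //; apply: cvgB => //; exact: cvg_cst.
Qed.

End RadialDilation.

Section MultiDilation.
Variables (R : realType) (V : normedModType R) (N : nat) (c : 'I_N -> V) (rho : R).
Hypotheses (rho_gt0 : 0 < rho)
  (c_sep : forall i j, i != j -> 2 * rho <= `|c i - c j|).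

Definition multi_dilate (t : 'I_N -> R) (p : V) : V :=
  p + \sum_m (dilate (c m) rho (t m) p - p).

Lemma ball_separated m j p : j != m -> `|p - c m| < rho -> rho <= `|p - c j|.
Proof.
move=> jm p_in; have := c_sep jm; have := ler_distD p (c j) (c m).
by rewrite (distrC (c j) p); lra.
Qed.

Lemma in_ball_or_outside p : (exists m, `|p - c m| < rho) \/ (forall m, rho <= `|p - c m|).
Proof.
have [[m p_in]|no_ball] := pselect (exists m, `|p - c m| < rho); first by left; exists m.
by right=> m; rewrite leNgt; apply/negP => p_in; apply: no_ball; exists m.
Qed.

Lemma multi_dilate_in m t p : `|p - c m| < rho -> multi_dilate t p = dilate (c m) rho (t m) p.
Proof.
move=> p_in; rewrite /multi_dilate (bigD1 m) //= big1 => [|j jm].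
  by rewrite addr0 addrC subrK.
by rewrite dilate_out ?subrr // (ball_separated jm p_in).
Qed.

Lemma multi_dilate_out t p : (forall m, rho <= `|p - c m|) -> multi_dilate t p = p.
Proof.
by move=> p_out; rewrite /multi_dilate big1 ?addr0 // => m _; rewrite dilate_out ?subrr.
Qed.

Lemma multi_dilate_ball m t p : `|p - c m| < rho -> `|multi_dilate t p - c m| < rho.
Proof. by move=> p_in; rewrite (multi_dilate_in _ p_in) dilate_ball. Qed.

Lemma multi_dilateD t t' p : multi_dilate t (multi_dilate t' p) = multi_dilate (t + t') p.
Proof.
have [[m p_in]|p_out] := in_ball_or_outside p; last by rewrite !multi_dilate_out.
by rewrite (multi_dilate_in _ (multi_dilate_ball t' p_in)) !(multi_dilate_in _ p_in) dilateD.
Qed.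

Lemma multi_dilate0 p : multi_dilate 0 p = p.
Proof. by rewrite /multi_dilate big1 ?addr0 // => m _; rewrite dilate0 subrr. Qed.

Lemma multi_dilate_moved t p : multi_dilate t p != p -> exists m, `|p - c m| < rho /\ t m != 0.
Proof.
have [[m p_in] moved|p_out] := in_ball_or_outside p; last by rewrite multi_dilate_out ?eqxx.
exists m; split=> //; apply: contra moved => /eqP tm0.
by rewrite (multi_dilate_in _ p_in) tm0 dilate0.
Qed.

Lemma multi_dilate_moves m t q :
  `|q - c m| < rho -> q != c m -> t m != 0 -> multi_dilate t q != q.
Proof.
move=> q_in q_neq tm; rewrite (multi_dilate_in _ q_in); apply/eqP => fixed.
by move/eqP: tm; apply; apply: dilate_fixed fixed.
Qed.

Lemma multi_dilate_cvg {T : Type} (F : set_system T) {FF : Filter F}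
    (tf : T -> 'I_N -> R) (pf : T -> V) (t : 'I_N -> R) (p : V) :
  (forall m, (fun x => tf x m) @ F --> t m) -> pf @ F --> p ->
  (fun x => multi_dilate (tf x) (pf x)) @ F --> multi_dilate t p.
Proof.
move=> tft pfp; apply: cvgD => //.
apply: (@cvg_big _ _ +%R 0 xpredT add_continuous) => m _.
by apply: cvgB => //; apply: dilate_cvg.
Qed.

End MultiDilation.

Section SegmentPoints.
Variables (R : realType) (V : normedModType R) (N : nat) (a e : V) (r : R).
Hypotheses (r_gt0 : 0 < r) (e_norm1 : `|e| = 1) (N_gt0 : (0 < N)%N).

Definition ball_radius : R := r / (4 * N%:R).

Definition segment_point (j : nat) : V := a + (2 * ball_radius * j%:R) *: e.

Definition center (m : 'I_N) : V := segment_point m.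

Definition bump_center (m : 'I_N) : V := segment_point (N + m).

Lemma ball_radius_gt0 : 0 < ball_radius.
Proof. by rewrite divr_gt0 // mulr_gt0 // ltr0n. Qed.

Lemma ball_radius_mul : ball_radius * (4 * N%:R) = r.
Proof. by rewrite mulfVK // gt_eqF // mulr_gt0 // ltr0n. Qed.

Lemma ball_radius_lt : ball_radius < r.
Proof.
have := ball_radius_mul; have := ball_radius_gt0.
have : (1 : R) <= N%:R by rewrite ler1n.
by nra.
Qed.

Lemma norm_segment_point j : `|segment_point j - a| = 2 * ball_radius * j%:R.
Proof.
rewrite /segment_point addrC addKr normrZ e_norm1 mulr1 ger0_norm //.
by rewrite !mulr_ge0 // ltW // ball_radius_gt0.
Qed.

Lemma segment_point_sep i j : i != j -> 2 * ball_radius <= `|segment_point i - segment_point j|.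
Proof.
move=> ij; rewrite /segment_point opprD addrACA subrr add0r -scalerBl.
rewrite normrZ e_norm1 mulr1 -mulrBr normrM ger0_norm; last first.
  by rewrite mulr_ge0 // ltW // ball_radius_gt0.
have ij1 : 1 <= `|i%:R - j%:R : R|.
  rewrite ler_normr; have [ij'|ji|ij_eq] := ltngtP i j; last by rewrite ij_eq eqxx in ij.
  - have : (i.+1 <= j)%N := ij'; rewrite -(ler_nat R) -natr1 => ij1.
    by apply/orP; right; lra.
  - have : (j.+1 <= i)%N := ji; rewrite -(ler_nat R) -natr1 => ji1.
    by apply/orP; left; lra.
have := ball_radius_gt0; nra.
Qed.

Lemma segment_ball_sub j p : (j < 2 * N)%N ->
  `|p - segment_point j| < ball_radius -> `|a - p| <= r - ball_radius.
Proof.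
move=> jN p_in; have := ler_distD (segment_point j) a p.
rewrite (distrC a (segment_point j)) norm_segment_point (distrC (segment_point j) p).
have : (j.+1 <= 2 * N)%N := jN; rewrite -(ler_nat R) -natr1 natrM => jN'.
have := ball_radius_mul; have := ball_radius_gt0.
have : ball_radius * (j%:R + 1) <= ball_radius * (2 * N%:R).
  by rewrite ler_wpM2l // ltW // ball_radius_gt0.
lra.
Qed.

Lemma center_sep i j : i != j -> 2 * ball_radius <= `|center i - center j|.
Proof. exact: segment_point_sep. Qed.

Lemma center_bump_sep i j : 2 * ball_radius <= `|center i - bump_center j|.
Proof.
apply: segment_point_sep; apply/negP => /eqP ij.
by have := ltn_ord i; rewrite ij; lia.
Qed.

Lemma bump_center_sep i j : i != j -> 2 * ball_radius <= `|bump_center i - bump_center j|.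
Proof. by move=> ij; apply: segment_point_sep; rewrite eqn_add2l. Qed.

Lemma center_ball_sub m p : `|p - center m| < ball_radius -> `|a - p| <= r - ball_radius.
Proof. by apply: segment_ball_sub; have := ltn_ord m; lia. Qed.

Lemma bump_ball_sub m p : `|p - bump_center m| < ball_radius -> `|a - p| <= r - ball_radius.
Proof. by apply: segment_ball_sub; have := ltn_ord m; lia. Qed.

End SegmentPoints.

Lemma continuous_glue (S T : topologicalType) (C : set S) (f g : S -> T) :
  closed C -> continuous g -> (forall x, ~ C x -> f x = g x) ->
  (forall x, C x -> {for x, continuous f}) -> continuous f.
Proof.
move=> C_closed g_cont fg f_cont x; have [Cx|nCx] := pselect (C x); first exact: f_cont.
have gf : {near x, g =1 f}.
  near=> y; apply/esym/fg; near: y.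
  by apply: open_nbhs_nbhs; split=> //; exact: closed_openC.
by apply: cvg_trans (near_eq_cvg gf) _; rewrite fg //; exact: g_cont.
Unshelve. all: by end_near.
Qed.

Lemma continuous_at_open_branch (S T : topologicalType) (U : set S) (h k : S -> T) x :
  open U -> U x -> {for x, continuous h} ->
  {for x, continuous (fun y => if `[< U y >] then h y else k y)}.
Proof.
move=> U_open Ux h_cont.
have hb : {near x, h =1 (fun y => if `[< U y >] then h y else k y)}.
  near=> y; rewrite asboolT //; near: y; exact: open_nbhs_nbhs.
by apply: cvg_trans (near_eq_cvg hb) _; rewrite asboolT.
Unshelve. all: by end_near.
Qed.

Section ChartQuandle.
Variables (R : realType) (n N : nat) (X : topologicalType) (U : set X)
  (phi : X -> 'rV[R]_n) (psi : 'rV[R]_n -> X) (a e : 'rV[R]_n) (r : R).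
Hypotheses (X_hausdorff : hausdorff_space X) (U_open : open U)
  (phiU_open : open (phi @` U)) (phi_cont : {within U, continuous phi})
  (psi_cont : {within phi @` U, continuous psi})
  (phiK : forall x, U x -> psi (phi x) = x)
  (r_gt0 : 0 < r) (e_norm1 : `|e| = 1) (N_gt0 : (0 < N)%N)
  (ball_sub : ball a r `<=` phi @` U).

Local Notation rho := (ball_radius N r).
Local Notation c := (@center R _ N a e r).
Local Notation d := (@bump_center R _ N a e r).

Let rho_gt0 : 0 < rho := ball_radius_gt0 r_gt0 N_gt0.
Let c_sep : forall i j, i != j -> 2 * rho <= `|c i - c j| := center_sep a r_gt0 e_norm1 N_gt0.

Definition bump (m : 'I_N) (p : 'rV[R]_n) : R := Num.max 0 (rho - `|p - d m|).

Definition chart_bump (y : X) (m : 'I_N) : R := if `[< U y >] then bump m (phi y) else 0.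

Definition chart_dilate (t : 'I_N -> R) (x : X) : X :=
  if `[< U x >] then psi (multi_dilate c rho t (phi x)) else x.

Definition chart_quandle (xy : X * X) : X := chart_dilate (chart_bump xy.2) xy.1.

Definition support_ball : set 'rV[R]_n := closed_ball a (r - rho).

Lemma psiK q : (phi @` U) q -> phi (psi q) = q.
Proof. by case=> x Ux <-; rewrite phiK. Qed.

Lemma psi_in_U q : (phi @` U) q -> U (psi q).
Proof. by case=> x Ux <-; rewrite phiK. Qed.

Lemma support_ballP p : support_ball p <-> `|a - p| <= r - rho.
Proof.
rewrite /support_ball closed_ballE //.
by rewrite subr_gt0; exact: ball_radius_lt.
Qed.

Lemma support_ball_sub : support_ball `<=` phi @` U.
Proof.
move=> p /support_ballP p_in; apply: ball_sub; rewrite -ball_normE /ball_ /=.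
by apply: le_lt_trans p_in _; rewrite ltrBlDr ltrDl.
Qed.

Lemma multi_dilate_support t p : multi_dilate c rho t p != p ->
  support_ball p /\ support_ball (multi_dilate c rho t p).
Proof.
move=> /(multi_dilate_moved rho_gt0 c_sep) [m [p_in _]].
have p'_in := multi_dilate_ball rho_gt0 c_sep t p_in.
by split; apply/support_ballP; apply: (center_ball_sub r_gt0 e_norm1 N_gt0 (m := m)).
Qed.

Lemma multi_dilate_chart t p : (phi @` U) p -> (phi @` U) (multi_dilate c rho t p).
Proof.
move=> Vp; have [->//|moved] := eqVneq (multi_dilate c rho t p) p.
exact/support_ball_sub/(multi_dilate_support moved).2.
Qed.

Lemma bump_ne0 m p : bump m p != 0 -> `|p - d m| < rho.
Proof. by apply: contraNT; rewrite -leNgt => far; rewrite /bump max_l // subr_le0. Qed.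

Lemma bump_center_ball m j p : `|p - c j| < rho -> bump m p = 0.
Proof.
move=> p_in; apply/eqP; apply: contraLR p_in => /bump_ne0 p_near; rewrite -leNgt.
have := center_bump_sep a r_gt0 e_norm1 N_gt0 j m; have := ler_distD p (c j) (d m).
by rewrite (distrC (c j) p); lra.
Qed.

Lemma bump_multi_dilate m t p : bump m (multi_dilate c rho t p) = bump m p.
Proof.
have [->//|moved] := eqVneq (multi_dilate c rho t p) p.
have [j [p_in _]] := multi_dilate_moved rho_gt0 c_sep moved.
by rewrite (bump_center_ball m p_in) (bump_center_ball m (multi_dilate_ball rho_gt0 c_sep t p_in)).
Qed.

Lemma chart_dilate_in t x : U x -> chart_dilate t x = psi (multi_dilate c rho t (phi x)).
Proof. by move=> Ux; rewrite /chart_dilate asboolT. Qed.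

Lemma chart_dilate_notin t x : ~ U x -> chart_dilate t x = x.
Proof. by move=> nUx; rewrite /chart_dilate asboolF. Qed.

Lemma chart_dilate_inE t x : U (chart_dilate t x) <-> U x.
Proof.
have [Ux|nUx] := pselect (U x); last by rewrite chart_dilate_notin.
rewrite chart_dilate_in //; split=> // _.
by apply/psi_in_U/multi_dilate_chart; exists x.
Qed.

Lemma chart_dilate0 x : chart_dilate 0 x = x.
Proof.
have [Ux|nUx] := pselect (U x); last by rewrite chart_dilate_notin.
by rewrite chart_dilate_in // multi_dilate0 phiK.
Qed.

Lemma chart_dilateD t t' x : chart_dilate t (chart_dilate t' x) = chart_dilate (t + t') x.
Proof.
have [Ux|nUx] := pselect (U x); last by rewrite !chart_dilate_notin // chart_dilate_inE.
have V' : (phi @` U) (multi_dilate c rho t' (phi x)) by apply: multi_dilate_chart; exists x.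
rewrite !(chart_dilate_in _ Ux) (chart_dilate_in _ (psi_in_U V')).
by rewrite psiK // (multi_dilateD rho_gt0 c_sep).
Qed.

Lemma chart_bump_dilate t y : chart_bump (chart_dilate t y) = chart_bump y.
Proof.
apply: funext => m; have [Uy|nUy] := pselect (U y); last by rewrite chart_dilate_notin.
have V' : (phi @` U) (multi_dilate c rho t (phi y)) by apply: multi_dilate_chart; exists y.
rewrite /chart_bump asboolT ?chart_dilate_inE // asboolT // chart_dilate_in //.
by rewrite psiK // bump_multi_dilate.
Qed.

Lemma chart_dilate_moved t x : chart_dilate t x <> x ->
  U x /\ multi_dilate c rho t (phi x) != phi x.
Proof.
have [Ux|nUx] := pselect (U x); last by rewrite chart_dilate_notin.
rewrite chart_dilate_in // => moved; split=> //.
by apply/eqP => fixed; apply: moved; rewrite fixed phiK.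
Qed.

Lemma chart_dilate_bump x : chart_dilate (chart_bump x) x = x.
Proof.
apply: contrapT => /chart_dilate_moved [Ux /(multi_dilate_moved rho_gt0 c_sep)].
by move=> [m [x_in]]; rewrite /chart_bump asboolT // (bump_center_ball m x_in) eqxx.
Qed.

Definition chart_support : set X := psi @` support_ball.

Lemma support_ball_compact : compact support_ball.
Proof.
apply: bounded_closed_compact; last exact: closed_ball_closed.
exists (`|a| + r); split; first by rewrite num_real.
move=> M aM p /support_ballP p_in; have := ler_distD a 0 p.
rewrite !sub0r !normrN /=; have := rho_gt0; have := normr_ge0 a; lra.
Qed.

Lemma chart_support_closed : closed chart_support.
Proof.
apply: compact_closed => //; apply: continuous_compact support_ball_compact.
exact: continuous_subspaceW support_ball_sub psi_cont.
Qed.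

Lemma chart_support_U : chart_support `<=` U.
Proof. by move=> _ [p /support_ball_sub Vp <-]; apply: psi_in_U. Qed.

Lemma chart_dilate_outside t x : ~ chart_support x -> chart_dilate t x = x.
Proof.
move=> x_out; apply: contrapT => /chart_dilate_moved [Ux moved]; apply: x_out.
by exists (phi x); [exact: (multi_dilate_support moved).1 | exact: phiK].
Qed.

Lemma chart_bump_outside y : ~ chart_support y -> chart_bump y = 0.
Proof.
move=> y_out; apply: funext => m; rewrite /chart_bump; case: asboolP => // Uy.
apply/eqP; apply: contraT => /bump_ne0 y_near; exfalso; apply: y_out.
exists (phi y); last exact: phiK.
exact/support_ballP/(bump_ball_sub r_gt0 e_norm1 N_gt0 y_near).
Qed.

Lemma phi_cont_at x : U x -> {for x, continuous phi}.
Proof.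
move=> Ux; have := phi_cont; rewrite continuous_open_subspace // => phi_cont_in.
by apply: phi_cont_in; rewrite inE.
Qed.

Lemma psi_cont_at q : (phi @` U) q -> {for q, continuous psi}.
Proof.
move=> Vq; have := psi_cont; rewrite continuous_open_subspace // => psi_cont_in.
by apply: psi_cont_in; rewrite inE.
Qed.

Lemma continuous_bump m : continuous (bump m).
Proof.
move=> p; apply: (@continuous_max _ _ (fun=> 0) (fun q : 'rV[R]_n => rho - `|q - d m|) p).
  exact: cst_continuous.
apply: (@cvgB _ _ _ _ (nbhs_filter p) (fun=> rho) (fun q : 'rV[R]_n => `|q - d m|)).
  exact: cvg_cst.
by apply: cvg_norm; apply: cvgB; [exact: cvg_id | exact: cvg_cst].
Qed.

Lemma continuous_chart_bump m : continuous (chart_bump^~ m).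
Proof.
apply: (continuous_glue (C := chart_support) (g := fun=> 0)) => //.
- exact: chart_support_closed.
- exact: cst_continuous.
- by move=> y /chart_bump_outside ->.
move=> y /chart_support_U Uy; apply: continuous_at_open_branch => //.
exact: (continuous_cvg _ (@continuous_bump m (phi y)) (phi_cont_at Uy)).
Qed.

Lemma continuous_chart_dilate (Z : topologicalType) (t : Z -> 'I_N -> R) :
  (forall m, continuous (fun z => t z m)) ->
  continuous (fun xz : X * Z => chart_dilate (t xz.2) xz.1).
Proof.
move=> t_cont; apply: (continuous_glue (C := fst @^-1` chart_support) (g := fst)).
- by apply: preimage_closed chart_support_closed => xz _; exact: cvg_fst.
- by move=> xz; exact: cvg_fst.
- by move=> xz /chart_dilate_outside ->.
move=> [x z] /chart_support_U /= Ux.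
have fstU_open : open (fst @^-1` U : set (X * Z)).
  by apply: open_comp U_open => xz _; exact: cvg_fst.
apply: (continuous_at_open_branch (U := fst @^-1` U)) => //=.
have V' : (phi @` U) (multi_dilate c rho (t z) (phi x)) by apply: multi_dilate_chart; exists x.
apply: (continuous_cvg _ (psi_cont_at V')); apply: (multi_dilate_cvg rho_gt0) => [m|].
  exact: (continuous_cvg _ (t_cont m z) cvg_snd).
exact: (continuous_cvg _ (phi_cont_at Ux) cvg_fst).
Qed.

Lemma continuous_chart_dilate_const t : continuous (chart_dilate t).
Proof.
move=> x; have diag_cont :=
  @continuous_chart_dilate X (fun=> t) (fun m => @cst_continuous _ _ (t m)) (x, x).
apply: (@continuous_cvg _ _ _ _ (nbhs_filter x) (fun x => (x, x)) _ (x, x) diag_cont).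
by apply: cvg_pair; exact: cvg_id.
Qed.

Lemma topological_quandle_chart : topological_quandle chart_quandle.
Proof.
apply: (topological_quandle_act (G := 'I_N -> R)).
- exact: chart_dilate0.
- exact: chart_dilateD.
- exact: continuous_chart_dilate_const.
- exact: chart_bump_dilate.
- exact: chart_dilate_bump.
- exact: continuous_chart_dilate continuous_chart_bump.
Qed.

Lemma chart_quandle_moved x y : chart_quandle (x, y) <> x ->
  exists m, `|phi x - c m| < rho /\ chart_bump y m != 0.
Proof.
by move=> /chart_dilate_moved [_ /(multi_dilate_moved rho_gt0 c_sep)].
Qed.

Definition probe (m : 'I_N) : 'rV[R]_n := c m + (rho / 2) *: e.

Lemma norm_probe m : `|probe m - c m| = rho / 2.
Proof. by rewrite /probe addrC addKr normrZ e_norm1 mulr1 ger0_norm // divr_ge0 // ltW. Qed.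

Lemma chart_quandle_moves_probe m y : chart_bump y m != 0 ->
  chart_quandle (psi (probe m), y) <> psi (probe m).
Proof.
move=> ym; have q_in : `|probe m - c m| < rho by rewrite norm_probe; have := rho_gt0; lra.
have q_neq : probe m != c m by rewrite -subr_eq0 -normr_eq0 norm_probe gt_eqF // divr_gt0.
have Vq : (phi @` U) (probe m).
  exact/support_ball_sub/support_ballP/(center_ball_sub r_gt0 e_norm1 N_gt0 q_in).
have Vq' := multi_dilate_chart (chart_bump y) Vq.
rewrite /chart_quandle /= (chart_dilate_in _ (psi_in_U Vq)) (psiK Vq) => fixed.
have := multi_dilate_moves rho_gt0 c_sep q_in q_neq ym.
by rewrite -(psiK Vq') fixed psiK ?eqxx.
Qed.

Lemma chart_bump_bump_center m j : chart_bump (psi (d m)) j = if j == m then rho else 0.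
Proof.
have Vd : (phi @` U) (d m).
  apply/support_ball_sub/support_ballP/(bump_ball_sub r_gt0 e_norm1 N_gt0 (m := m)).
  by rewrite subrr normr0.
rewrite /chart_bump asboolT; last exact: psi_in_U.
rewrite (psiK Vd) /bump.
have [->|jm] := eqVneq j m; first by rewrite subrr normr0 subr0 max_r // ltW.
rewrite max_l // subr_le0; have := bump_center_sep a r_gt0 e_norm1 N_gt0 jm.
by rewrite distrC; have := rho_gt0; lra.
Qed.

Lemma has_disjoint_translations_chart : has_disjoint_translations chart_quandle N.
Proof.
exists (fun m => psi (d m)); split=> [i | i j x ij].
  exists (psi (probe i)); apply: chart_quandle_moves_probe.
  by rewrite chart_bump_bump_center eqxx gt_eqF.
move=> /chart_quandle_moved [m [x_in_m]]; rewrite chart_bump_bump_center.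
move: x_in_m; case: (m =P i) => [-> x_in_i _|_]; last by rewrite eqxx.
apply: contrapT => /chart_quandle_moved [m' []].
rewrite chart_bump_bump_center; case: (m' =P j) => [->|_]; last by rewrite eqxx.
by rewrite ltNge (ball_separated c_sep _ x_in_i) // eq_sym.
Qed.

Lemma not_has_disjoint_translations_chart M : (N < M)%N ->
  ~ has_disjoint_translations chart_quandle M.
Proof.
move=> NM [ys [ys_moves ys_disj]].
have [f ys_f] : {f : 'I_M -> 'I_N & forall i, chart_bump (ys i) (f i) != 0}.
  apply: (@choice _ _ (fun i m => chart_bump (ys i) m != 0)) => i.
  by have [x /chart_quandle_moved [m [_ ym]]] := ys_moves i; exists m.
suff f_inj : injective f by have := leq_card f f_inj; rewrite !card_ord; lia.
move=> i j fij; apply/eqP; apply: contraT => ij; exfalso.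
apply: (chart_quandle_moves_probe (ys_f j)); rewrite -fij.
exact: ys_disj ij (chart_quandle_moves_probe (ys_f i)).
Qed.

End ChartQuandle.

Lemma exists_unit_vector (R : realType) n : (0 < n)%N -> exists e : 'rV[R]_n, `|e| = 1.
Proof.
move=> n_gt0; have ones_neq0 : const_mx 1 != 0 :> 'rV[R]_n.
  apply/eqP => /matrixP /(_ ord0 (Ordinal n_gt0)); rewrite !mxE.
  by move/eqP; rewrite oner_eq0.
by exists (`|const_mx 1 : 'rV[R]_n|^-1 *: const_mx 1); rewrite normrZV // unitfE normr_eq0.
Qed.

Lemma exists_quandle_with_disjoint_translations (R : realType) (n N : nat)
    (X : topologicalType) (x0 : X) :
  (0 < n)%N -> (0 < N)%N -> hausdorff_space X -> locally_euclidean R n X ->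
  exists f : X * X -> X, [/\ topological_quandle f, has_disjoint_translations f N &
    forall M, (N < M)%N -> ~ has_disjoint_translations f M].
Proof.
move=> n_gt0 N_gt0 X_hausdorff /(_ x0)
  [U [phi [psi [U_open Ux0 phiU_open phi_cont [psi_cont phiK]]]]].
have [r r_gt0 ball_sub] : exists2 r : R, 0 < r & ball (phi x0) r `<=` phi @` U.
  by apply/nbhs_ballP/open_nbhs_nbhs; split=> //; exists x0.
have [e e_norm1] := exists_unit_vector R n_gt0.
exists (@chart_quandle R n N X U phi psi (phi x0) e r); split.
- exact: topological_quandle_chart.
- exact: has_disjoint_translations_chart.
- by move=> M; apply: not_has_disjoint_translations_chart.
Qed.

Lemma has_disjoint_translations_nontrivial (X : topologicalType) (f : X * X -> X) M :
  has_disjoint_translations f M.+1 -> ~ trivial_quandle f.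
Proof. by move=> [ys [ys_moves _]] f_triv; have [x] := ys_moves ord0; apply; apply: f_triv. Qed.

Theorem mainTheorem3 (R : realType) (n : nat) (X : topologicalType) :
  (0 < n)%N -> topological_manifold R n X -> (exists x : X, True) ->
  exists F : nat -> (X * X -> X),
    (forall i, topological_quandle (F i) /\ ~ trivial_quandle (F i)) /\
    (forall i j, i <> j -> ~ quandle_isomorphic (F i) (F j)).
Proof.
move=> n_gt0 [X_hausdorff _ X_euclidean] [x0 _].
have [F F_spec] := choice (fun k => exists_quandle_with_disjoint_translations
  x0 n_gt0 (ltn0Sn k) X_hausdorff X_euclidean).
exists F; split=> [k | i j ij /quandle_isomorphic_disjoint_translations FiFj].
  have [F_quandle F_disj _] := F_spec k.
  by split=> //; exact: has_disjoint_translations_nontrivial F_disj.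
have [_ Fi_disj Fi_max] := F_spec i; have [_ Fj_disj Fj_max] := F_spec j.
have [i_lt_j|j_lt_i|//] := ltngtP i j.
- by apply: Fi_max j.+1 _ ((FiFj _).2 Fj_disj).
- by apply: Fj_max i.+1 _ ((FiFj _).1 Fi_disj).
Qed.
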